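(* For every finite multiset $\Gamma$ and formulas $\varphi,\psi,\chi$: if $\Gamma\Rightarrow\varphi$ and $\Gamma,\psi\Rightarrow\chi$ are both provable in $\mathsf{G4iSLt}$, then $\Gamma,\varphi\to\psi\Rightarrow\chi$ is provable in $\mathsf{G4iSLt}$.
   Context: Formulas are built by the grammar $\varphi ::= p \mid \bot \mid \varphi\land\varphi \mid \varphi\lor\varphi \mid \varphi\to\varphi \mid \Box\varphi$, with $p$ ranging over a countably infinite set of propositional variables. For a multiset $\Gamma$, $\Box\Gamma=\{\Box\psi:\psi\in\Gamma\}$; a boxed formula is one of the form $\Box\psi$. A sequent is $\Gamma\Rightarrow\chi$ with $\Gamma$ a finite multiset of formulas and $\chi$ a formula. The sequent calculus $\mathsf{G4iSLt}$ has the following rules, where $p$ is a propositional variable and $\Phi$ always denotes a multiset containing no boxed formula: (⊥L) $\bot,\Gamma\Rightarrow\chi$ (no premise); (IdP) $\Gamma,p\Rightarrow p$ (no premise); (∧L) from $\Gamma,\varphi,\psi\Rightarrow\chi$ infer $\Gamma,\varphi\land\psi\Rightarrow\chi$; (∧R) from $\Gamma\Rightarrow\varphi$ and $\Gamma\Rightarrow\psi$ infer $\Gamma\Rightarrow\varphi\land\psi$; (∨L) from $\Gamma,\varphi\Rightarrow\chi$ and $\Gamma,\psi\Rightarrow\chi$ infer $\Gamma,\varphi\lor\psi\Rightarrow\chi$; (∨R$_i$), $i\in\{1,2\}$: from $\Gamma\Rightarrow\varphi_i$ infer $\Gamma\Rightarrow\varphi_1\lor\varphi_2$; (p→L) from $\Gamma,p,\varphi\Rightarrow\chi$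 infer $\Gamma,p,p\to\varphi\Rightarrow\chi$; (→R) from $\Gamma,\varphi\Rightarrow\psi$ infer $\Gamma\Rightarrow\varphi\to\psi$; (□→L) from $\Phi,\Gamma,\psi,\Box\varphi\Rightarrow\varphi$ and $\Phi,\Box\Gamma,\psi\Rightarrow\chi$ infer $\Phi,\Box\Gamma,\Box\varphi\to\psi\Rightarrow\chi$; (SLtR) from $\Phi,\Gamma,\Box\varphi\Rightarrow\varphi$ infer $\Phi,\Box\Gamma\Rightarrow\Box\varphi$; (∧→L) from $\Gamma,\varphi\to(\psi\to\chi)\Rightarrow\delta$ infer $\Gamma,(\varphi\land\psi)\to\chi\Rightarrow\delta$; (∨→L) from $\Gamma,\varphi\to\chi,\psi\to\chi\Rightarrow\delta$ infer $\Gamma,(\varphi\lor\psi)\to\chi\Rightarrow\delta$; (→→L) from $\Gamma,\psi\to\chi\Rightarrow\varphi\to\psi$ and $\Gamma,\chi\Rightarrow\delta$ infer $\Gamma,(\varphi\to\psi)\to\chi\Rightarrow\delta$. A proof of a sequent $S$ is a finite tree of sequents with root $S$ in which each interior node together with its children forms an instance of a rule (conclusion, premises) and each leaf is the conclusion of a premise-free rule; $S$ is provable if it has a proof. *)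

(* Multisets are represented as lists; every rule's conclusion
   may be any permutation (= the same multiset) of the displayed context. *)
From Stdlib Require Import List Permutation.
Import ListNotations.

Inductive form : Type :=
| Var : nat -> form
| Bot : form
| And : form -> form -> form
| Or  : form -> form -> form
| Imp : form -> form -> form
| Box : form -> form.

Definition is_boxed (A : form) : Prop :=
  match A with Box _ => True | _ => False end.

Definition unboxed (Phi : list form) : Prop := Forall (fun A => ~ is_boxed A) Phi.

Inductive G4iSLt : list form -> form -> Prop :=
| BotL : forall D G c, Permutation D (Bot :: G) -> G4iSLt D c
| IdP : forall D G p, Permutation D (Var p :: G) -> G4iSLt D (Var p)
| AndL : forall D G a b c, Permutation D (And a b :: G) ->
    G4iSLt (a :: b :: G) c -> G4iSLt D c
| AndR : forall G a b, G4iSLt G a -> G4iSLt G b -> G4iSLt G (And a b)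
| OrL : forall D G a b c, Permutation D (Or a b :: G) ->
    G4iSLt (a :: G) c -> G4iSLt (b :: G) c -> G4iSLt D c
| OrR1 : forall G a b, G4iSLt G a -> G4iSLt G (Or a b)
| OrR2 : forall G a b, G4iSLt G b -> G4iSLt G (Or a b)
| PImpL : forall D G p a c, Permutation D (Var p :: Imp (Var p) a :: G) ->
    G4iSLt (Var p :: a :: G) c -> G4iSLt D c
| ImpR : forall G a b, G4iSLt (a :: G) b -> G4iSLt G (Imp a b)
| BoxImpL : forall D Phi G a b c, unboxed Phi ->
    Permutation D (Phi ++ map Box G ++ [Imp (Box a) b]) ->
    G4iSLt (Phi ++ G ++ [b; Box a]) a ->
    G4iSLt (Phi ++ map Box G ++ [b]) c -> G4iSLt D c
| SLtR : forall D Phi G a, unboxed Phi ->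
    Permutation D (Phi ++ map Box G) ->
    G4iSLt (Phi ++ G ++ [Box a]) a -> G4iSLt D (Box a)
| AndImpL : forall D G a b c d, Permutation D (Imp (And a b) c :: G) ->
    G4iSLt (Imp a (Imp b c) :: G) d -> G4iSLt D d
| OrImpL : forall D G a b c d, Permutation D (Imp (Or a b) c :: G) ->
    G4iSLt (Imp a c :: Imp b c :: G) d -> G4iSLt D d
| ImpImpL : forall D G a b c d, Permutation D (Imp (Imp a b) c :: G) ->
    G4iSLt (Imp b c :: G) (Imp a b) -> G4iSLt (c :: G) d -> G4iSLt D d.

(* The proof works in an equivalent presentation G4u of the calculus, in
   which the modal rules (box->L) and (SLtR) strip one box from EVERY formula
   of the context instead of splitting it as Phi, Box Gamma; the operator
   [unbox] does this. *)

From Stdlib Require Import List Permutation Lia.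
Import ListNotations.

Definition form_eq_dec : forall x y : form, {x = y} + {x <> y}.
Proof. decide equality; apply PeanoNat.Nat.eq_dec. Defined.

(* Number of occurrences of z in the one-element multiset [x]; kept as a
   named constant so that arithmetic on occurrence counts stays linear. *)
Definition occ (x z : form) : nat := if form_eq_dec x z then 1 else 0.

Lemma count_occ_cons_occ (x z : form) (l : list form) :
  count_occ form_eq_dec (x :: l) z = occ x z + count_occ form_eq_dec l z.
Proof. unfold occ; simpl; destruct (form_eq_dec x z); reflexivity. Qed.

Definition unbox (A : form) : form := match A with Box B => B | _ => A end.

(* Proves a goal [Permutation l l'] from the permutation hypotheses in
   context: both sides are compared as multisets by counting occurrences of
   an arbitrary formula z, which reduces the goal to linear arithmetic. *)
Ltac multiset :=
  repeat match goal with
  | H : Permutation _ _ |- _ =>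
      pose proof (proj1 (@Permutation_count_occ form form_eq_dec _ _) H); clear H
  end;
  apply (proj2 (@Permutation_count_occ form form_eq_dec _ _));
  let z := fresh "z" in
  intro z;
  repeat match goal with
  | H : forall x : form, count_occ _ _ x = count_occ _ _ x |- _ => specialize (H z)
  end;
  cbn [map app unbox] in *;
  repeat rewrite ?map_app, ?count_occ_app, ?count_occ_cons_occ in *;
  cbn [count_occ] in *; lia.

(* This
   is the case distinction "principal / side formula" in every inversion. *)
Lemma perm_cases (Z X : form) (G D0 : list form) :
  Permutation (Z :: G) (X :: D0) ->
  (Z = X /\ Permutation G D0) \/
  (exists G0, Permutation G (X :: G0) /\ Permutation D0 (Z :: G0)).
Proof.
  intros HP. destruct (form_eq_dec Z X) as [<- | HZX].
  - left. split; [reflexivity | exact (Permutation_cons_inv HP)].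
  - right.
    assert (HX : In X G).
    { destruct (Permutation_in X (Permutation_sym HP) (in_eq X D0)) as [E | HX];
        [congruence | exact HX]. }
    destruct (in_split X G HX) as [G1 [G2 ->]].
    exists (G1 ++ G2). split; multiset.
Qed.

Inductive G4u : list form -> form -> Prop :=
| UBotL : forall D G c, Permutation D (Bot :: G) -> G4u D c
| UIdP : forall D G p, Permutation D (Var p :: G) -> G4u D (Var p)
| UAndL : forall D G a b c, Permutation D (And a b :: G) ->
    G4u (a :: b :: G) c -> G4u D c
| UAndR : forall G a b, G4u G a -> G4u G b -> G4u G (And a b)
| UOrL : forall D G a b c, Permutation D (Or a b :: G) ->
    G4u (a :: G) c -> G4u (b :: G) c -> G4u D c
| UOrR1 : forall G a b, G4u G a -> G4u G (Or a b)
| UOrR2 : forall G a b, G4u G b -> G4u G (Or a b)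
| UPImpL : forall D G p a c, Permutation D (Var p :: Imp (Var p) a :: G) ->
    G4u (Var p :: a :: G) c -> G4u D c
| UImpR : forall G a b, G4u (a :: G) b -> G4u G (Imp a b)
| UBoxImpL : forall D G a b c, Permutation D (Imp (Box a) b :: G) ->
    G4u (b :: Box a :: map unbox G) a -> G4u (b :: G) c -> G4u D c
| USLtR : forall D a, G4u (Box a :: map unbox D) a -> G4u D (Box a)
| UAndImpL : forall D G a b c d, Permutation D (Imp (And a b) c :: G) ->
    G4u (Imp a (Imp b c) :: G) d -> G4u D d
| UOrImpL : forall D G a b c d, Permutation D (Imp (Or a b) c :: G) ->
    G4u (Imp a c :: Imp b c :: G) d -> G4u D d
| UImpImpL : forall D G a b c d, Permutation D (Imp (Imp a b) c :: G) ->
    G4u (Imp b c :: G) (Imp a b) -> G4u (c :: G) d -> G4u D d.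

Lemma G4u_weaken : forall D c, G4u D c ->
  forall E D', Permutation D' (E ++ D) -> G4u D' c.
Proof.
  induction 1; intros E D' HE; pose proof (Permutation_map unbox HE).
  - apply UBotL with (E ++ G); multiset.
  - apply UIdP with (E ++ G); multiset.
  - apply UAndL with (E ++ G) a b; [multiset | apply IHG4u with E; multiset].
  - apply UAndR; eauto.
  - apply UOrL with (E ++ G) a b;
      [multiset | apply IHG4u1 with E; multiset | apply IHG4u2 with E; multiset].
  - apply UOrR1; eauto.
  - apply UOrR2; eauto.
  - apply UPImpL with (E ++ G) p a; [multiset | apply IHG4u with E; multiset].
  - apply UImpR, IHG4u with E; multiset.
  - apply UBoxImpL with (E ++ G) a b;
      [multiset | apply IHG4u1 with (map unbox E); multiset | apply IHG4u2 with E; multiset].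
  - apply USLtR, IHG4u with (map unbox E); multiset.
  - apply UAndImpL with (E ++ G) a b c; [multiset | apply IHG4u with E; multiset].
  - apply UOrImpL with (E ++ G) a b c; [multiset | apply IHG4u with E; multiset].
  - apply UImpImpL with (E ++ G) a b c;
      [multiset | apply IHG4u1 with E; multiset | apply IHG4u2 with E; multiset].
Qed.

Lemma G4u_perm (D D' : list form) (c : form) :
  G4u D c -> Permutation D D' -> G4u D' c.
Proof. intros H HP. apply (G4u_weaken D c H []). simpl. symmetry; exact HP. Qed.

(* A hypothesis Box A may be replaced by A (A proves Box A in this logic);
   needed because the modal rules unbox the whole context. *)
Lemma G4u_unbox_perm : forall D c, G4u D c ->
  forall A D0 D', Permutation D (Box A :: D0) -> Permutation D' (A :: D0) -> G4u D' c.
Proof.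
  induction 1; intros A0 D0 D' HD HD';
  try (destruct (perm_cases _ _ _ _ (perm_trans (Permutation_sym H) HD))
         as [[E _] | [G0 [HG HD0]]]; [discriminate E |]).
  - apply UBotL with (A0 :: G0); multiset.
  - apply UIdP with (A0 :: G0); multiset.
  - apply UAndL with (A0 :: G0) a b; [multiset | apply IHG4u with A0 (a :: b :: G0); multiset].
  - apply UAndR; eauto.
  - apply UOrL with (A0 :: G0) a b;
      [multiset | apply IHG4u1 with A0 (a :: G0) | apply IHG4u2 with A0 (b :: G0)]; multiset.
  - apply UOrR1; eauto.
  - apply UOrR2; eauto.
  - destruct (perm_cases _ _ _ _ HG) as [[E _] | [G1 [HG1 HD1]]]; [discriminate E |].
    apply UPImpL with (A0 :: G1) p a;
      [multiset | apply IHG4u with A0 (Var p :: a :: G1); multiset].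
  - apply UImpR, IHG4u with A0 (a :: D0); multiset.
  - apply UBoxImpL with (A0 :: G0) a b;
      [multiset | | apply IHG4u2 with A0 (b :: G0); multiset].
    pose proof (Permutation_map unbox HG).
    destruct A0 as [| | | | | A']; try (apply (G4u_perm _ _ _ H0); multiset).
    apply IHG4u1 with A' (b :: Box a :: map unbox G0); multiset.
  - apply USLtR.
    pose proof (Permutation_map unbox HD). pose proof (Permutation_map unbox HD').
    destruct A0 as [| | | | | A']; try (apply (G4u_perm _ _ _ H); multiset).
    apply IHG4u with A' (Box a :: map unbox D0); multiset.
  - apply UAndImpL with (A0 :: G0) a b c;
      [multiset | apply IHG4u with A0 (Imp a (Imp b c) :: G0); multiset].
  - apply UOrImpL with (A0 :: G0) a b c;
      [multiset | apply IHG4u with A0 (Imp a c :: Imp b c :: G0); multiset].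
  - apply UImpImpL with (A0 :: G0) a b c;
      [multiset | apply IHG4u1 with A0 (Imp b c :: G0) | apply IHG4u2 with A0 (c :: G0)];
      multiset.
Qed.

Lemma G4u_unbox (A : form) (D : list form) (c : form) :
  G4u (A :: D) c -> G4u (unbox A :: D) c.
Proof.
  intros H. destruct A as [| | | | | B]; try exact H.
  apply (G4u_unbox_perm _ _ H B D); reflexivity.
Qed.

Lemma G4u_unbox_app (Ys L : list form) (c : form) :
  G4u (Ys ++ L) c -> G4u (map unbox Ys ++ L) c.
Proof.
  revert L. induction Ys as [| y Ys IH]; intros L H; [exact H |].
  apply (G4u_perm (map unbox Ys ++ unbox y :: L)); [apply IH | multiset].
  apply (G4u_perm (unbox y :: Ys ++ L)); [apply G4u_unbox, H | multiset].
Qed.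

Definition principal_premises (X : form) (G : list form) (c : form) : Prop :=
  match X with
  | And a b => G4u (a :: b :: G) c
  | Or a b => G4u (a :: G) c /\ G4u (b :: G) c
  | Imp (Var _) a => G4u (a :: G) c
  | Imp (Box a) b => G4u (b :: Box a :: map unbox G) a /\ G4u (b :: G) c
  | Imp (And a b) d => G4u (Imp a (Imp b d) :: G) c
  | Imp (Or a b) d => G4u (Imp a d :: Imp b d :: G) c
  | Imp (Imp a b) d => G4u (Imp b d :: G) (Imp a b) /\ G4u (d :: G) c
  | _ => False
  end.

Section Inversion.

Variables (X : form) (Ys : list form).

Hypothesis X_connective :
  match X with And _ _ | Or _ _ | Imp _ _ => True | _ => False end.

Hypothesis X_invertible :
  forall G c, principal_premises X G c -> G4u (Ys ++ G) c.

(* Then the replacement of X by Ys is admissible, since in any other rule X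
   is a side formula and the induction hypothesis applies to the premises. *)
Lemma inversion_perm : forall D c, G4u D c ->
  forall D0 D', Permutation D (X :: D0) -> Permutation D' (Ys ++ D0) -> G4u D' c.
Proof.
  assert (X_unbox : unbox X = X) by (destruct X; easy).
  induction 1; intros D0 D' HD HD';
  try (destruct (perm_cases _ _ _ _ (perm_trans (Permutation_sym H) HD))
         as [[<- HG] | [G0 [HG HD0]]]).
  - exact (False_ind _ X_connective).
  - apply UBotL with (Ys ++ G0); multiset.
  - exact (False_ind _ X_connective).
  - apply UIdP with (Ys ++ G0); multiset.
  - apply (G4u_perm (Ys ++ G)); [apply X_invertible; exact H0 | multiset].
  - apply UAndL with (Ys ++ G0) a b; [multiset | apply IHG4u with (a :: b :: G0); multiset].
  - apply UAndR; eauto.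
  - apply (G4u_perm (Ys ++ G)); [apply X_invertible; split; assumption | multiset].
  - apply UOrL with (Ys ++ G0) a b;
      [multiset | apply IHG4u1 with (a :: G0) | apply IHG4u2 with (b :: G0)]; multiset.
  - apply UOrR1; eauto.
  - apply UOrR2; eauto.
  - exact (False_ind _ X_connective).
  - destruct (perm_cases _ _ _ _ HG) as [[<- HG1] | [G1 [HG1 HD1]]].
    + apply (G4u_perm (Ys ++ Var p :: G0)); [apply X_invertible | multiset].
      apply (G4u_perm _ _ _ H0); multiset.
    + apply UPImpL with (Ys ++ G1) p a;
        [multiset | apply IHG4u with (Var p :: a :: G1); multiset].
  - apply UImpR, IHG4u with (a :: D0); multiset.
  - apply (G4u_perm (Ys ++ G)); [apply X_invertible; split; assumption | multiset].
  - apply UBoxImpL with (Ys ++ G0) a b;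
      [multiset | | apply IHG4u2 with (b :: G0); multiset].
    pose proof (Permutation_map unbox HG).
    apply (G4u_perm (map unbox Ys ++ b :: Box a :: map unbox G0)); [| multiset].
    apply G4u_unbox_app, IHG4u1 with (b :: Box a :: map unbox G0); [| reflexivity].
    cbn [map] in *. rewrite X_unbox in *. multiset.
  - apply USLtR.
    pose proof (Permutation_map unbox HD). pose proof (Permutation_map unbox HD').
    apply (G4u_perm (map unbox Ys ++ Box a :: map unbox D0)); [| multiset].
    apply G4u_unbox_app, IHG4u with (Box a :: map unbox D0); [| reflexivity].
    cbn [map] in *. rewrite X_unbox in *. multiset.
  - apply (G4u_perm (Ys ++ G)); [apply X_invertible; exact H0 | multiset].
  - apply UAndImpL with (Ys ++ G0) a b c;
      [multiset | apply IHG4u with (Imp a (Imp b c) :: G0); multiset].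
  - apply (G4u_perm (Ys ++ G)); [apply X_invertible; exact H0 | multiset].
  - apply UOrImpL with (Ys ++ G0) a b c;
      [multiset | apply IHG4u with (Imp a c :: Imp b c :: G0); multiset].
  - apply (G4u_perm (Ys ++ G)); [apply X_invertible; split; assumption | multiset].
  - apply UImpImpL with (Ys ++ G0) a b c;
      [multiset | apply IHG4u1 with (Imp b c :: G0) | apply IHG4u2 with (c :: G0)];
      multiset.
Qed.

Lemma inversion (D : list form) (c : form) : G4u (X :: D) c -> G4u (Ys ++ D) c.
Proof. intros H. apply (inversion_perm _ _ H D); reflexivity. Qed.
End Inversion.

Lemma inv_AndL (a b : form) (D : list form) (c : form) :
  G4u (And a b :: D) c -> G4u (a :: b :: D) c.
Proof. apply (inversion (And a b) [a; b]); [exact I | now intros G d H]. Qed.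

Lemma inv_OrL (a b : form) (D : list form) (c : form) :
  G4u (Or a b :: D) c -> G4u (a :: D) c /\ G4u (b :: D) c.
Proof.
  intros H.
  split; [apply (inversion (Or a b) [a]) | apply (inversion (Or a b) [b])];
    solve [exact I | exact H | intros G d [Ha Hb]; assumption].
Qed.

Lemma inv_ImpL_consequent (x y : form) (D : list form) (c : form) :
  match x with And _ _ | Or _ _ => False | _ => True end ->
  G4u (Imp x y :: D) c -> G4u (y :: D) c.
Proof.
  intros Hx. apply (inversion (Imp x y) [y]); [exact I |].
  intros G d H. destruct x; try contradiction; simpl in H; tauto.
Qed.

Lemma inv_AndImpL (a b y : form) (D : list form) (c : form) :
  G4u (Imp (And a b) y :: D) c -> G4u (Imp a (Imp b y) :: D) c.
Proof. apply (inversion (Imp (And a b) y) [Imp a (Imp b y)]); [exact I | now intros G d H]. Qed.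

Lemma inv_OrImpL (a b y : form) (D : list form) (c : form) :
  G4u (Imp (Or a b) y :: D) c -> G4u (Imp a y :: Imp b y :: D) c.
Proof. apply (inversion (Imp (Or a b) y) [Imp a y; Imp b y]); [exact I | now intros G d H]. Qed.

(* The statement of the main lemma for a fixed derivable sequent G => f,
   generalised over extra hypotheses D so that the principal cases may use
   the induction hypothesis in an enlarged context. *)
Definition imp_left_admissible (G : list form) (f : form) : Prop :=
  forall D y z, G4u (y :: D ++ G) z -> G4u (Imp f y :: D ++ G) z.

(* Principal cases: phi is the conclusion of a right rule (or an axiom), and
   the left rule for phi -> psi matching phi's main connective applies. *)
Lemma imp_left_Var (G G0 : list form) (p : nat) :
  Permutation G (Var p :: G0) -> imp_left_admissible G (Var p).
Proof.
  intros HG E y z Hy.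
  apply UPImpL with (E ++ G0) p y; [multiset | apply (G4u_perm _ _ _ Hy); multiset].
Qed.

Lemma imp_left_And (G : list form) (a b : form) :
  imp_left_admissible G a -> imp_left_admissible G b ->
  imp_left_admissible G (And a b).
Proof.
  intros Ha Hb E y z Hy.
  apply UAndImpL with (E ++ G) a b y; [reflexivity |].
  apply Ha, Hb, Hy.
Qed.

Lemma imp_left_Or1 (G : list form) (a b : form) :
  imp_left_admissible G a -> imp_left_admissible G (Or a b).
Proof.
  intros Ha E y z Hy.
  apply UOrImpL with (E ++ G) a b y; [reflexivity |].
  apply (Ha (Imp b y :: E)), (G4u_weaken _ _ Hy [Imp b y]). multiset.
Qed.

Lemma imp_left_Or2 (G : list form) (a b : form) :
  imp_left_admissible G b -> imp_left_admissible G (Or a b).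
Proof.
  intros Hb E y z Hy.
  apply UOrImpL with (E ++ G) a b y; [reflexivity |].
  apply (G4u_perm (Imp b y :: Imp a y :: E ++ G)); [| multiset].
  apply (Hb (Imp a y :: E)), (G4u_weaken _ _ Hy [Imp a y]). multiset.
Qed.

Lemma imp_left_Imp (G : list form) (a b : form) :
  G4u (a :: G) b -> imp_left_admissible G (Imp a b).
Proof.
  intros Hab E y z Hy.
  apply UImpImpL with (E ++ G) a b y; [reflexivity | | exact Hy].
  apply UImpR, (G4u_weaken _ _ Hab (Imp b y :: E)). multiset.
Qed.

Lemma imp_left_Box (G : list form) (a : form) :
  G4u (Box a :: map unbox G) a -> imp_left_admissible G (Box a).
Proof.
  intros Ha E y z Hy.
  apply UBoxImpL with (E ++ G) a y; [reflexivity | | exact Hy].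
  apply (G4u_weaken _ _ Ha (y :: map unbox E)). multiset.
Qed.

Lemma imp_left_premise (Ps G E : list form) (f y z : form) :
  imp_left_admissible (Ps ++ G) f ->
  G4u (Ps ++ y :: E ++ G) z -> G4u (Ps ++ Imp f y :: E ++ G) z.
Proof.
  intros Hf Hy.
  apply (G4u_perm (Imp f y :: E ++ Ps ++ G)); [apply Hf, (G4u_perm _ _ _ Hy) |]; multiset.
Qed.

Lemma imp_left : forall G f, G4u G f -> imp_left_admissible G f.
Proof.
  induction 1.
  - intros E y z Hy. apply UBotL with (Imp c y :: E ++ G); multiset.
  - eapply imp_left_Var; eassumption.
  - intros E y z Hy.
    apply UAndL with (Imp c y :: E ++ G) a b; [multiset |].
    apply (imp_left_premise [a; b] _ _ _ _ _ IHG4u).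
    apply inv_AndL, (G4u_perm _ _ _ Hy); multiset.
  - apply imp_left_And; assumption.
  - intros E y z Hy.
    destruct (inv_OrL a b (y :: E ++ G) z) as [Ha Hb];
      [apply (G4u_perm _ _ _ Hy); multiset |].
    apply UOrL with (Imp c y :: E ++ G) a b; [multiset | |].
    + exact (imp_left_premise [a] _ _ _ _ _ IHG4u1 Ha).
    + exact (imp_left_premise [b] _ _ _ _ _ IHG4u2 Hb).
  - apply imp_left_Or1; assumption.
  - apply imp_left_Or2; assumption.
  - intros E y z Hy.
    apply UPImpL with (Imp c y :: E ++ G) p a; [multiset |].
    apply (imp_left_premise [Var p; a] _ _ _ _ _ IHG4u).
    apply (G4u_perm (a :: y :: E ++ Var p :: G)); [| multiset].
    apply (inv_ImpL_consequent (Var p)), (G4u_perm _ _ _ Hy); [exact I | multiset].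
  - apply imp_left_Imp; assumption.
  - intros E y z Hy.
    apply UBoxImpL with (Imp c y :: E ++ G) a b; [multiset | |].
    + apply (G4u_weaken _ _ H0 (map unbox (Imp c y :: E))). multiset.
    + apply (imp_left_premise [b] _ _ _ _ _ IHG4u2).
      apply (inv_ImpL_consequent (Box a)), (G4u_perm _ _ _ Hy); [exact I | multiset].
  - apply imp_left_Box; assumption.
  - intros E y z Hy.
    apply UAndImpL with (Imp d y :: E ++ G) a b c; [multiset |].
    apply (imp_left_premise [Imp a (Imp b c)] _ _ _ _ _ IHG4u).
    apply inv_AndImpL, (G4u_perm _ _ _ Hy); multiset.
  - intros E y z Hy.
    apply UOrImpL with (Imp d y :: E ++ G) a b c; [multiset |].
    apply (imp_left_premise [Imp a c; Imp b c] _ _ _ _ _ IHG4u).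
    apply inv_OrImpL, (G4u_perm _ _ _ Hy); multiset.
  - intros E y z Hy.
    apply UImpImpL with (Imp d y :: E ++ G) a b c; [multiset | |].
    + apply (G4u_weaken _ _ H0 (Imp d y :: E)). multiset.
    + apply (imp_left_premise [c] _ _ _ _ _ IHG4u2).
      apply (inv_ImpL_consequent (Imp a b)), (G4u_perm _ _ _ Hy); [exact I | multiset].
Qed.

Lemma G4iSLt_perm : forall D c, G4iSLt D c -> forall D', Permutation D D' -> G4iSLt D' c.
Proof.
  induction 1; intros D' HP.
  - apply BotL with G; multiset.
  - apply IdP with G; multiset.
  - apply AndL with G a b; [multiset | assumption].
  - apply AndR; auto.
  - apply OrL with G a b; [multiset | assumption | assumption].
  - apply OrR1; auto.
  - apply OrR2; auto.
  - apply PImpL with G p a; [multiset | assumption].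
  - apply ImpR, IHG4iSLt; multiset.
  - apply BoxImpL with Phi G a b; [assumption | multiset | assumption | assumption].
  - apply SLtR with Phi G; [assumption | multiset | assumption].
  - apply AndImpL with G a b c; [multiset | assumption].
  - apply OrImpL with G a b c; [multiset | assumption].
  - apply ImpImpL with G a b c; [multiset | assumption | assumption].
Qed.

Lemma unbox_unboxed (Phi : list form) : unboxed Phi -> map unbox Phi = Phi.
Proof.
  induction 1 as [| x l Hx _ IH]; [reflexivity |].
  cbn [map]. rewrite IH. destruct x; [reflexivity .. | contradiction Hx; exact I].
Qed.

Lemma unbox_map_Box (G : list form) : map unbox (map Box G) = G.
Proof. rewrite map_map. apply map_id. Qed.

(* Every G4iSLt proof is a G4u proof: unbox (Phi, Box Gamma) = Phi, Gamma. *)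
Lemma G4iSLt_to_G4u : forall D c, G4iSLt D c -> G4u D c.
Proof.
  induction 1.
  - apply UBotL with G; assumption.
  - apply UIdP with G; assumption.
  - apply UAndL with G a b; assumption.
  - apply UAndR; assumption.
  - apply UOrL with G a b; assumption.
  - apply UOrR1; assumption.
  - apply UOrR2; assumption.
  - apply UPImpL with G p a; assumption.
  - apply UImpR; assumption.
  - apply UBoxImpL with (Phi ++ map Box G) a b; [multiset | |].
    + rewrite map_app, (unbox_unboxed Phi H), unbox_map_Box.
      apply (G4u_perm _ _ _ IHG4iSLt1). multiset.
    + apply (G4u_perm _ _ _ IHG4iSLt2). multiset.
  - apply USLtR.
    pose proof (Permutation_map unbox H0) as Hmap.
    rewrite map_app, (unbox_unboxed Phi H), unbox_map_Box in Hmap.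
    apply (G4u_perm _ _ _ IHG4iSLt). multiset.
  - apply UAndImpL with G a b c; assumption.
  - apply UOrImpL with G a b c; assumption.
  - apply UImpImpL with G a b c; assumption.
Qed.

Fixpoint nonboxed_part (l : list form) : list form :=
  match l with
  | [] => []
  | Box _ :: l => nonboxed_part l
  | x :: l => x :: nonboxed_part l
  end.

Fixpoint boxed_part (l : list form) : list form :=
  match l with
  | [] => []
  | Box y :: l => y :: boxed_part l
  | _ :: l => boxed_part l
  end.

Lemma nonboxed_part_unboxed (l : list form) : unboxed (nonboxed_part l).
Proof.
  induction l as [| x l IH]; [constructor |].
  destruct x; cbn; try (constructor; [intros [] | exact IH]); exact IH.
Qed.

Lemma context_split (l : list form) :
  Permutation l (nonboxed_part l ++ map Box (boxed_part l)).
Proof. induction l as [| [] l IH]; cbn; multiset. Qed.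

Lemma unbox_context_split (l : list form) :
  Permutation (map unbox l) (nonboxed_part l ++ boxed_part l).
Proof. induction l as [| [] l IH]; cbn; multiset. Qed.

Lemma G4u_to_G4iSLt : forall D c, G4u D c -> G4iSLt D c.
Proof.
  induction 1.
  - apply BotL with G; assumption.
  - apply IdP with G; assumption.
  - apply AndL with G a b; assumption.
  - apply AndR; assumption.
  - apply OrL with G a b; assumption.
  - apply OrR1; assumption.
  - apply OrR2; assumption.
  - apply PImpL with G p a; assumption.
  - apply ImpR; assumption.
  - pose proof (context_split G). pose proof (unbox_context_split G).
    apply BoxImpL with (nonboxed_part G) (boxed_part G) a b;
      [apply nonboxed_part_unboxed | multiset | |].
    + apply (G4iSLt_perm _ _ IHG4u1). multiset.
    + apply (G4iSLt_perm _ _ IHG4u2). multiset.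
  - pose proof (context_split D). pose proof (unbox_context_split D).
    apply SLtR with (nonboxed_part D) (boxed_part D);
      [apply nonboxed_part_unboxed | assumption |].
    apply (G4iSLt_perm _ _ IHG4u). multiset.
  - apply AndImpL with G a b c; assumption.
  - apply OrImpL with G a b c; assumption.
  - apply ImpImpL with G a b c; assumption.
Qed.

Theorem mainTheorem11 (G : list form) (a b c : form) :
  G4iSLt G a -> G4iSLt (b :: G) c -> G4iSLt (Imp a b :: G) c.
Proof.
  intros Ha Hb. apply G4u_to_G4iSLt.
  apply (imp_left G a (G4iSLt_to_G4u _ _ Ha) []).
  exact (G4iSLt_to_G4u _ _ Hb).
Qed.
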